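(* Fix $l^0_{jk},l^0_{ki},l^0_{ij}>0$ and let $\mathcal{W}^{ijk}$ be the set of $(w_i,w_j,w_k)\in\mathbb{R}^3$ for which $l_{ab}>0$ defined by $\cosh\frac{l_{ab}}{2}=e^{w_a+w_b}\cosh\frac{l^0_{ab}}{2}$ exist for $ab\in\{jk,ki,ij\}$. For $(w_i,w_j,w_k)\in\mathcal{W}^{ijk}$, let $\theta^i_{jk},\theta^j_{ki},\theta^k_{ij}$ be the lengths of the sides opposite to the sides of lengths $l_{jk},l_{ki},l_{ij}$ in the hyperbolic right-angled hexagon whose three pairwise non-adjacent sides have lengths $l_{jk},l_{ki},l_{ij}$. Then the differential 1-form $\theta^i_{jk}\,dw_i+\theta^j_{ki}\,dw_j+\theta^k_{ij}\,dw_k$ is closed on $\mathcal{W}^{ijk}$, and for any $c\in\mathcal{W}^{ijk}$ the integral $$\mathcal{E}(w_i,w_j,w_k)=\int_c^{(w_i,w_j,w_k)}\left(\theta^i_{jk}\,dw_i+\theta^j_{ki}\,dw_j+\theta^k_{ij}\,dw_k\right)$$ is a well-defined strictly concave function on $\mathcal{W}^{ijk}$ satisfying $\frac{\partial\mathcal{E}}{\partial w_i}=\theta^i_{jk}$, $\frac{\partial\mathcal{E}}{\partial w_j}=\theta^j_{ki}$, $\frac{\partial\mathcal{E}}{\partial w_k}=\theta^k_{ij}$.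
   Context: For any three positive numbers there is a hyperbolic right-angled hexagon, unique up to isometry, whose three pairwise non-adjacent sides have these lengths. *)

From Stdlib Require Import Reals.
From Coquelicot Require Import Coquelicot.
Open Scope R_scope.

Definition acosh (x : R) : R := ln (x + sqrt (x ^ 2 - 1)).

(* The length l_ab > 0 with cosh (l_ab / 2) = e^(w_a + w_b) cosh (l0_ab / 2)
   (meaningful when the right-hand side is > 1). *)
Definition edge_len (l0 wa wb : R) : R :=
  2 * acosh (exp (wa + wb) * cosh (l0 / 2)).

(* The domain W^{ijk}: the l_ab > 0 exist, i.e. the right-hand sides exceed 1. *)
Definition inW (l0jk l0ki l0ij : R) (wi wj wk : R) : Prop :=
  1 < exp (wj + wk) * cosh (l0jk / 2) /\
  1 < exp (wk + wi) * cosh (l0ki / 2) /\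
  1 < exp (wi + wj) * cosh (l0ij / 2).

(* In the hyperbolic right-angled hexagon whose pairwise non-adjacent sides
   have lengths a, b, c, the side opposite to the side of length a has length
   given by the hyperbolic cosine law for right-angled hexagons. *)
Definition hex_opp (a b c : R) : R :=
  acosh ((cosh a + cosh b * cosh c) / (sinh b * sinh c)).

Definition theta_i (l0jk l0ki l0ij wi wj wk : R) : R :=
  hex_opp (edge_len l0jk wj wk) (edge_len l0ki wk wi) (edge_len l0ij wi wj).
Definition theta_j (l0jk l0ki l0ij wi wj wk : R) : R :=
  hex_opp (edge_len l0ki wk wi) (edge_len l0ij wi wj) (edge_len l0jk wj wk).
Definition theta_k (l0jk l0ki l0ij wi wj wk : R) : R :=
  hex_opp (edge_len l0ij wi wj) (edge_len l0jk wj wk) (edge_len l0ki wk wi).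

(* E(x) = integral of theta_i dw_i + theta_j dw_j + theta_k dw_k along the
   straight segment from c = (ci,cj,ck) to x = (wi,wj,wk). *)
Definition energy (l0jk l0ki l0ij ci cj ck wi wj wk : R) : R :=
  RInt (fun t =>
     let xi := ci + t * (wi - ci) in
     let xj := cj + t * (wj - cj) in
     let xk := ck + t * (wk - ck) in
     theta_i l0jk l0ki l0ij xi xj xk * (wi - ci)
   + theta_j l0jk l0ki l0ij xi xj xk * (wj - cj)
   + theta_k l0jk l0ki l0ij xi xj xk * (wk - ck)) 0 1.

From Stdlib Require Import Reals Lra Psatz.
From Coquelicot Require Import Coquelicot.
Open Scope R_scope.

(* Write [c_a = cosh l_a] for the three edge lengths. The cosine law for right-angled hexagons
   makes each [theta] an explicit function of [w]; differentiating it shows that the Jacobian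
   [d theta_a / d w_b] is a symmetric matrix ([hess]) whose quadratic form is
   [-2 / sqrt (c1^2 + c2^2 + c3^2 + 2 c1 c2 c3 - 1)] times a sum of squares with positive weights.
   Symmetry is the closedness of the 1-form. Differentiating under the integral sign and using
   this symmetry, the straight-line integral [E] has derivative [theta . v] along every line; a
   secant formula upgrades this to the chain rule along any differentiable path, which yields path
   independence by the fundamental theorem of calculus, and the partial derivatives. Since [W] is
   cut out by inequalities linear in [w], it is convex, and negative definiteness along segments
   gives strict concavity. *)

(** * Hyperbolic functions *)

Lemma acosh_arg_pos X : 1 <= X -> 0 < X + sqrt (X ^ 2 - 1).
Proof. intros; pose proof (sqrt_pos (X ^ 2 - 1)); lra. Qed.

Lemma exp_2acosh X : 1 <= X -> exp (2 * acosh X) = (X + sqrt (X ^ 2 - 1)) ^ 2.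
Proof.
  intros HX; unfold acosh.
  replace (2 * ln _) with (ln (X + sqrt (X ^ 2 - 1)) + ln (X + sqrt (X ^ 2 - 1))) by ring.
  rewrite exp_plus, exp_ln by (apply acosh_arg_pos; lra); ring.
Qed.

Lemma exp_neg_2acosh X : 1 <= X -> exp (- (2 * acosh X)) = (X - sqrt (X ^ 2 - 1)) ^ 2.
Proof.
  intros HX; rewrite exp_Ropp, exp_2acosh by lra.
  assert (Hs := sqrt_sqrt (X ^ 2 - 1) ltac:(nra)); assert (Hp := acosh_arg_pos X HX).
  field_simplify_eq; [nra | lra].
Qed.

Lemma cosh_2acosh X : 1 <= X -> cosh (2 * acosh X) = 2 * X ^ 2 - 1.
Proof.
  intros HX; unfold cosh; rewrite exp_2acosh, exp_neg_2acosh by lra.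
  assert (Hs := sqrt_sqrt (X ^ 2 - 1) ltac:(nra)); nra.
Qed.

Lemma sinh_2acosh X : 1 <= X -> sinh (2 * acosh X) = 2 * X * sqrt (X ^ 2 - 1).
Proof. intros HX; unfold sinh; rewrite exp_2acosh, exp_neg_2acosh by lra; lra. Qed.

Lemma is_derive_acosh y : 1 < y -> is_derive acosh y (/ sqrt (y ^ 2 - 1)).
Proof.
  intros H; unfold acosh.
  assert (Hq : 0 < y ^ 2 - 1) by nra.
  assert (Hs := sqrt_lt_R0 _ Hq); assert (Hss := sqrt_sqrt _ (Rlt_le _ _ Hq)).
  auto_derive; replace (y * (y * 1) + - (1)) with (y ^ 2 - 1) by ring.
  - repeat split; lra.
  - field_simplify_eq; [nra | split; lra].
Qed.

Lemma exp_mul_exp_opp x : exp x * exp (- x) = 1.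
Proof. rewrite <- exp_plus, Rplus_opp_r; apply exp_0. Qed.

Lemma cosh_sqr_sub_sinh_sqr x : cosh x ^ 2 - sinh x ^ 2 = 1.
Proof. unfold cosh, sinh; pose proof (exp_mul_exp_opp x); nra. Qed.

Lemma sinh_lt_cosh x : sinh x < cosh x.
Proof. unfold cosh, sinh; pose proof (exp_pos (- x)); lra. Qed.

Lemma cosh_ge_1 x : 1 <= cosh x.
Proof.
  unfold cosh; pose proof (exp_mul_exp_opp x).
  pose proof (exp_pos x); pose proof (exp_pos (- x)).
  pose proof (pow2_ge_0 (exp x - exp (- x))); nra.
Qed.

Lemma is_derive_eq_val (f : R -> R) x l l' : is_derive f x l -> l = l' -> is_derive f x l'.
Proof. now intros ? <-. Qed.

Lemma is_derive_Rplus (f g : R -> R) x df dg : is_derive f x df -> is_derive g x dg ->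
  is_derive (fun t => f t + g t) x (df + dg).
Proof. apply (is_derive_plus f g). Qed.

Lemma is_derive_Rminus (f g : R -> R) x df dg : is_derive f x df -> is_derive g x dg ->
  is_derive (fun t => f t - g t) x (df - dg).
Proof. apply (is_derive_minus f g). Qed.

Lemma is_derive_Rmult (f g : R -> R) x df dg : is_derive f x df -> is_derive g x dg ->
  is_derive (fun t => f t * g t) x (df * g x + f x * dg).
Proof. intros; apply (is_derive_mult f g); auto; intros; apply Rmult_comm. Qed.

Lemma is_derive_Rdiv (f g : R -> R) x df dg : is_derive f x df -> is_derive g x dg -> g x <> 0 ->
  is_derive (fun t => f t / g t) x ((df * g x - f x * dg) / g x ^ 2).
Proof. apply is_derive_div. Qed.

Lemma is_derive_Rcomp (phi f : R -> R) x dphi df :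
  is_derive phi (f x) dphi -> is_derive f x df -> is_derive (fun t => phi (f t)) x (df * dphi).
Proof. apply (is_derive_comp phi f). Qed.

Lemma is_derive_Rconst (a x : R) : is_derive (fun _ => a) x 0.
Proof. apply (is_derive_const (V := R_NormedModule)). Qed.

Lemma is_derive_Rid (x : R) : is_derive (fun x => x) x 1.
Proof. apply (is_derive_id (K := R_AbsRing)). Qed.

Lemma is_derive_cosh x : is_derive cosh x (sinh x).
Proof. apply is_derive_Reals, derivable_pt_lim_cosh. Qed.

Lemma is_derive_sinh x : is_derive sinh x (cosh x).
Proof. apply is_derive_Reals, derivable_pt_lim_sinh. Qed.

Lemma is_derive_line a v s : is_derive (fun s => a + s * v) s v.
Proof. auto_derive; auto; ring. Qed.

Lemma Derive_eq_of_is_derive (f g : R -> R) x y l m :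
  is_derive f x l -> is_derive g y m -> l = m -> Derive f x = Derive g y.
Proof. intros Hf Hg <-; rewrite (is_derive_unique _ _ _ Hf); exact (eq_sym (is_derive_unique _ _ _ Hg)). Qed.

(* Coquelicot states derivative values in [R_NormedModule], where [ring] does not recognise [R]. *)
Ltac Rring := match goal with |- ?a = ?b => change (@eq R a b) end; ring.

(** * The Jacobian of theta *)

(* [hex_disc (cosh a) (cosh b) (cosh c) = (cosh a + cosh b cosh c)^2 - (sinh b sinh c)^2],
   so it is the numerator of [y^2 - 1] for the argument [y] of [acosh] in [hex_opp a b c]. *)
Definition hex_disc c1 c2 c3 := c1 ^ 2 + c2 ^ 2 + c3 ^ 2 + 2 * c1 * c2 * c3 - 1.

Lemma hex_disc_pos c1 c2 c3 : 1 <= c1 -> 1 <= c2 -> 1 <= c3 -> 0 < hex_disc c1 c2 c3.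
Proof. intros; unfold hex_disc; assert (1 <= c1 * c2) by nra; assert (1 <= c1 * c2 * c3) by nra; nra. Qed.

Lemma hex_disc_swap12 c1 c2 c3 : hex_disc c2 c1 c3 = hex_disc c1 c2 c3.
Proof. unfold hex_disc; ring. Qed.

Lemma hex_disc_swap23 c1 c2 c3 : hex_disc c1 c3 c2 = hex_disc c1 c2 c3.
Proof. unfold hex_disc; ring. Qed.

Lemma hex_arg_gt_1 a b c : 0 < sinh b -> 0 < sinh c ->
  1 < (cosh a + cosh b * cosh c) / (sinh b * sinh c).
Proof.
  intros Hb Hc; apply Rlt_div_r; [nra |].
  pose proof (cosh_ge_1 a); pose proof (sinh_lt_cosh b); pose proof (sinh_lt_cosh c); nra.
Qed.

Lemma sqrt_hex_arg a b c : 0 < sinh b -> 0 < sinh c ->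
  sqrt (((cosh a + cosh b * cosh c) / (sinh b * sinh c)) ^ 2 - 1)
  = sqrt (hex_disc (cosh a) (cosh b) (cosh c)) / (sinh b * sinh c).
Proof.
  intros Hb Hc.
  assert (Eb := cosh_sqr_sub_sinh_sqr b); assert (Ec := cosh_sqr_sub_sinh_sqr c).
  rewrite <- (sqrt_pow2 (sinh b * sinh c)) at 2 by nra.
  rewrite <- sqrt_div_alt by (apply pow2_gt_0; nra).
  f_equal; unfold hex_disc; field_simplify_eq; [nra | nra].
Qed.

Lemma hex_opp_derivative_algebra ca cb cc sa sb sc da db dc r :
  sb <> 0 -> sc <> 0 -> r <> 0 -> cb ^ 2 - sb ^ 2 = 1 -> cc ^ 2 - sc ^ 2 = 1 ->
  ((da * sa + (db * sb * cc + cb * (dc * sc))) * (sb * sc)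
    - (ca + cb * cc) * (db * cb * sc + sb * (dc * cc))) / (sb * sc) ^ 2 * / (r / (sb * sc))
  = (sa * da - (cc + ca * cb) * (db / sb) - (cb + ca * cc) * (dc / sc)) / r.
Proof.
  intros Hb Hc Hr Eb Ec.
  replace ((da * sa + (db * sb * cc + cb * (dc * sc))) * (sb * sc)
    - (ca + cb * cc) * (db * cb * sc + sb * (dc * cc)))
    with (sb * sc * (sa * da) - sc * db * (cc + ca * cb) - sb * dc * (cb + ca * cc))
    by (transitivity (sb * sc * (sa * da) - sc * db * (cc + ca * cb) - sb * dc * (cb + ca * cc)
          + db * sc * cc * (sb ^ 2 - cb ^ 2 + 1) + dc * cb * sb * (sc ^ 2 - cc ^ 2 + 1));
        [replace (sb ^ 2 - cb ^ 2 + 1) with 0 by lra;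
         replace (sc ^ 2 - cc ^ 2 + 1) with 0 by lra; ring | ring]).
  field; tauto.
Qed.

Lemma is_derive_hex_opp_comp (a b c : R -> R) (t da db dc : R) :
  is_derive a t da -> is_derive b t db -> is_derive c t dc ->
  0 < sinh (b t) -> 0 < sinh (c t) ->
  is_derive (fun t => hex_opp (a t) (b t) (c t)) t
   ((sinh (a t) * da - (cosh (c t) + cosh (a t) * cosh (b t)) * (db / sinh (b t))
      - (cosh (b t) + cosh (a t) * cosh (c t)) * (dc / sinh (c t)))
    / sqrt (hex_disc (cosh (a t)) (cosh (b t)) (cosh (c t)))).
Proof.
  intros Ha Hb Hc Pb Pc; unfold hex_opp.
  eapply is_derive_eq_val.
  { apply (is_derive_Rcomp acosh
      (fun t => (cosh (a t) + cosh (b t) * cosh (c t)) / (sinh (b t) * sinh (c t)))).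
    - apply is_derive_acosh, hex_arg_gt_1; assumption.
    - assert (Dcosh : forall f df, is_derive f t df -> is_derive (fun t => cosh (f t)) t (df * sinh (f t)))
        by (intros; apply (is_derive_Rcomp cosh); auto using is_derive_cosh).
      assert (Dsinh : forall f df, is_derive f t df -> is_derive (fun t => sinh (f t)) t (df * cosh (f t)))
        by (intros; apply (is_derive_Rcomp sinh); auto using is_derive_sinh).
      apply is_derive_Rdiv.
      + exact (is_derive_Rplus _ _ _ _ _ (Dcosh a da Ha)
                 (is_derive_Rmult _ _ _ _ _ (Dcosh b db Hb) (Dcosh c dc Hc))).
      + exact (is_derive_Rmult _ _ _ _ _ (Dsinh b db Hb) (Dsinh c dc Hc)).
      + apply Rgt_not_eq, Rmult_lt_0_compat; assumption. }
  rewrite sqrt_hex_arg by assumption.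
  apply hex_opp_derivative_algebra; try lra; try apply cosh_sqr_sub_sinh_sqr.
  apply Rgt_not_eq, sqrt_lt_R0, hex_disc_pos; apply cosh_ge_1.
Qed.

Definition edge_arg (l0 wa wb : R) := exp (wa + wb) * cosh (l0 / 2).

Definition edge_cosh (l0 wa wb : R) := 2 * edge_arg l0 wa wb ^ 2 - 1.

Lemma cosh_edge_len l0 wa wb : 1 <= edge_arg l0 wa wb -> cosh (edge_len l0 wa wb) = edge_cosh l0 wa wb.
Proof. apply cosh_2acosh. Qed.

Lemma sinh_edge_len l0 wa wb : 1 <= edge_arg l0 wa wb ->
  sinh (edge_len l0 wa wb) = 2 * edge_arg l0 wa wb * sqrt (edge_arg l0 wa wb ^ 2 - 1).
Proof. apply sinh_2acosh. Qed.

Lemma sinh_edge_len_pos l0 wa wb : 1 < edge_arg l0 wa wb -> 0 < sinh (edge_len l0 wa wb).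
Proof.
  intros H; rewrite sinh_edge_len by lra.
  assert (0 < sqrt (edge_arg l0 wa wb ^ 2 - 1)) by (apply sqrt_lt_R0; nra); nra.
Qed.

Lemma edge_cosh_gt_1 l0 wa wb : 1 < edge_arg l0 wa wb -> 1 < edge_cosh l0 wa wb.
Proof. unfold edge_cosh; intros; nra. Qed.

Lemma is_derive_edge_len_comp l0 (ga gb : R -> R) (t da db : R) :
  is_derive ga t da -> is_derive gb t db -> 1 < edge_arg l0 (ga t) (gb t) ->
  is_derive (fun t => edge_len l0 (ga t) (gb t)) t
    (2 * (edge_arg l0 (ga t) (gb t) * (da + db) / sqrt (edge_arg l0 (ga t) (gb t) ^ 2 - 1))).
Proof.
  intros Ha Hb HX; unfold edge_len; apply is_derive_scal.
  eapply is_derive_eq_val.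
  { apply (is_derive_Rcomp acosh (fun t => exp (ga t + gb t) * cosh (l0 / 2))).
    - apply is_derive_acosh, HX.
    - apply is_derive_Rmult; [apply (is_derive_Rcomp exp (fun t => ga t + gb t)) |].
      + apply is_derive_exp.
      + apply is_derive_Rplus; eassumption.
      + apply is_derive_Rconst. }
  unfold edge_arg; simpl; unfold Rdiv; ring.
Qed.

Definition hess_diag c1 c2 c3 :=
  -2 * ((c3 + c1 * c2) / (c2 - 1) + (c2 + c1 * c3) / (c3 - 1)) / sqrt (hex_disc c1 c2 c3).

Definition hess_off c1 c2 c3 := 2 * (c3 - c1 - c2 - 1) / ((c3 - 1) * sqrt (hex_disc c1 c2 c3)).

Lemma hess_off_swap12 c1 c2 c3 : hess_off c2 c1 c3 = hess_off c1 c2 c3.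
Proof. unfold hess_off; rewrite hex_disc_swap12; f_equal; ring. Qed.

Lemma theta_derivative_algebra X1 X2 X3 du dv dw :
  1 < X1 -> 1 < X2 -> 1 < X3 ->
  let s1 := sqrt (X1 ^ 2 - 1) in let s2 := sqrt (X2 ^ 2 - 1) in let s3 := sqrt (X3 ^ 2 - 1) in
  let c1 := 2 * X1 ^ 2 - 1 in let c2 := 2 * X2 ^ 2 - 1 in let c3 := 2 * X3 ^ 2 - 1 in
  (2 * X1 * s1 * (2 * (X1 * (dv + dw) / s1))
   - (c3 + c1 * c2) * (2 * (X2 * (dw + du) / s2) / (2 * X2 * s2))
   - (c2 + c1 * c3) * (2 * (X3 * (du + dv) / s3) / (2 * X3 * s3))) / sqrt (hex_disc c1 c2 c3)
  = hess_diag c1 c2 c3 * du + hess_off c1 c2 c3 * dv + hess_off c1 c3 c2 * dw.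
Proof.
  intros H1 H2 H3 s1 s2 s3 c1 c2 c3.
  assert (P1 : 0 < s1) by (apply sqrt_lt_R0; nra).
  assert (P2 : 0 < s2) by (apply sqrt_lt_R0; nra).
  assert (P3 : 0 < s3) by (apply sqrt_lt_R0; nra).
  assert (Q2 : s2 * s2 = X2 ^ 2 - 1) by (apply sqrt_sqrt; nra).
  assert (Q3 : s3 * s3 = X3 ^ 2 - 1) by (apply sqrt_sqrt; nra).
  assert (K : forall X s z, s <> 0 -> X <> 0 -> 2 * (X * z / s) / (2 * X * s) = z / (s * s))
    by (intros; field; auto).
  rewrite !K, Q2, Q3 by lra.
  unfold hess_diag, hess_off; rewrite (hex_disc_swap23 c1 c2 c3).
  assert (0 < sqrt (hex_disc c1 c2 c3)) by (apply sqrt_lt_R0, hex_disc_pos; unfold c1, c2, c3; nra).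
  unfold c1, c2, c3 in *; field; repeat split; nra.
Qed.

Lemma is_derive_theta_i_comp A B C (gi gj gk : R -> R) (t dgi dgj dgk : R) :
  is_derive gi t dgi -> is_derive gj t dgj -> is_derive gk t dgk ->
  inW A B C (gi t) (gj t) (gk t) ->
  let c1 := edge_cosh A (gj t) (gk t) in
  let c2 := edge_cosh B (gk t) (gi t) in
  let c3 := edge_cosh C (gi t) (gj t) in
  is_derive (fun t => theta_i A B C (gi t) (gj t) (gk t)) t
    (hess_diag c1 c2 c3 * dgi + hess_off c1 c2 c3 * dgj + hess_off c1 c3 c2 * dgk).
Proof.
  intros Hi Hj Hk [W1 [W2 W3]] c1 c2 c3; unfold theta_i.
  change (1 < edge_arg A (gj t) (gk t)) in W1.
  change (1 < edge_arg B (gk t) (gi t)) in W2.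
  change (1 < edge_arg C (gi t) (gj t)) in W3.
  eapply is_derive_eq_val.
  { apply is_derive_hex_opp_comp; try apply is_derive_edge_len_comp;
      try apply sinh_edge_len_pos; eassumption. }
  cbv beta; rewrite !cosh_edge_len, !sinh_edge_len by lra.
  apply theta_derivative_algebra; assumption.
Qed.

Lemma inW_rot A B C wi wj wk : inW A B C wi wj wk -> inW B C A wj wk wi.
Proof. intros (? & ? & ?); repeat split; assumption. Qed.

Definition theta_dot A B C wi wj wk bi bj bk :=
  theta_i A B C wi wj wk * bi + theta_j A B C wi wj wk * bj + theta_k A B C wi wj wk * bk.

Lemma theta_dot_0 A B C wi wj wk : theta_dot A B C wi wj wk 0 0 0 = 0.
Proof. unfold theta_dot; ring. Qed.

Definition hess_form c1 c2 c3 ai aj ak bi bj bk :=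
  hess_diag c1 c2 c3 * ai * bi + hess_diag c2 c3 c1 * aj * bj + hess_diag c3 c1 c2 * ak * bk
  + hess_off c1 c2 c3 * (ai * bj + aj * bi) + hess_off c1 c3 c2 * (ai * bk + ak * bi)
  + hess_off c2 c3 c1 * (aj * bk + ak * bj).

Definition hess A B C wi wj wk :=
  hess_form (edge_cosh A wj wk) (edge_cosh B wk wi) (edge_cosh C wi wj).

Lemma hess_sym A B C wi wj wk ai aj ak bi bj bk :
  hess A B C wi wj wk ai aj ak bi bj bk = hess A B C wi wj wk bi bj bk ai aj ak.
Proof. unfold hess, hess_form; ring. Qed.

Lemma is_derive_theta_dot_comp A B C (gi gj gk bi bj bk : R -> R) (t dgi dgj dgk dbi dbj dbk : R) :
  is_derive gi t dgi -> is_derive gj t dgj -> is_derive gk t dgk ->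
  is_derive bi t dbi -> is_derive bj t dbj -> is_derive bk t dbk ->
  inW A B C (gi t) (gj t) (gk t) ->
  is_derive (fun t => theta_dot A B C (gi t) (gj t) (gk t) (bi t) (bj t) (bk t)) t
    (hess A B C (gi t) (gj t) (gk t) dgi dgj dgk (bi t) (bj t) (bk t)
     + theta_dot A B C (gi t) (gj t) (gk t) dbi dbj dbk).
Proof.
  intros Hi Hj Hk Hbi Hbj Hbk W.
  assert (Wj := inW_rot _ _ _ _ _ _ W); assert (Wk := inW_rot _ _ _ _ _ _ Wj).
  eapply is_derive_eq_val.
  { apply is_derive_Rplus; [apply is_derive_Rplus |]; apply is_derive_Rmult; try eassumption.
    - exact (is_derive_theta_i_comp A B C gi gj gk t dgi dgj dgk Hi Hj Hk W).
    - exact (is_derive_theta_i_comp B C A gj gk gi t dgj dgk dgi Hj Hk Hi Wj).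
    - exact (is_derive_theta_i_comp C A B gk gi gj t dgk dgi dgj Hk Hi Hj Wk). }
  cbv zeta; unfold hess, hess_form, theta_dot, theta_j, theta_k, theta_i.
  rewrite !(hess_off_swap12 (edge_cosh B _ _)), !(hess_off_swap12 (edge_cosh C _ _)).
  Rring.
Qed.

(* With [a_k = c_k - 1 > 0], the quadratic form equals [-2 / sqrt (hex_disc c1 c2 c3)] times
   [2 Σ a_k u_k^2 + Σ (u_k - u_l)^2 + Σ (a_k + a_l + 2) / a_m (u_k + u_l)^2],
   the last two sums over the three pairs [{k, l}] with [m] the remaining index. *)
Lemma hess_form_neg c1 c2 c3 u v w : 1 < c1 -> 1 < c2 -> 1 < c3 -> (u <> 0 \/ v <> 0 \/ w <> 0) ->
  hess_form c1 c2 c3 u v w u v w < 0.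
Proof.
  intros H1 H2 H3 Hne; unfold hess_form.
  assert (Hs : 0 < sqrt (hex_disc c1 c2 c3)) by (apply sqrt_lt_R0, hex_disc_pos; lra).
  set (a1 := c1 - 1); set (a2 := c2 - 1); set (a3 := c3 - 1).
  set (F := 2 * a1 * u ^ 2 + 2 * a2 * v ^ 2 + 2 * a3 * w ^ 2
            + (u - v) ^ 2 + (v - w) ^ 2 + (w - u) ^ 2
            + (a1 + a2 + 2) / a3 * (u + v) ^ 2 + (a2 + a3 + 2) / a1 * (v + w) ^ 2
            + (a3 + a1 + 2) / a2 * (w + u) ^ 2).
  assert (Hpos : 0 < F).
  { assert (Sq : forall k x, 0 < k -> 0 <= k * x ^ 2)
      by (intros; apply Rmult_le_pos; [lra | apply pow2_ge_0]).
    assert (Sq' : forall k x, 0 < k -> x <> 0 -> 0 < k * x ^ 2)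
      by (intros; apply Rmult_lt_0_compat; [lra | apply pow2_gt_0; assumption]).
    assert (0 < a1) by (unfold a1; lra); assert (0 < a2) by (unfold a2; lra);
      assert (0 < a3) by (unfold a3; lra).
    assert (0 <= (a1 + a2 + 2) / a3 * (u + v) ^ 2) by (apply Sq, Rdiv_lt_0_compat; lra).
    assert (0 <= (a2 + a3 + 2) / a1 * (v + w) ^ 2) by (apply Sq, Rdiv_lt_0_compat; lra).
    assert (0 <= (a3 + a1 + 2) / a2 * (w + u) ^ 2) by (apply Sq, Rdiv_lt_0_compat; lra).
    pose proof (pow2_ge_0 (u - v)); pose proof (pow2_ge_0 (v - w)); pose proof (pow2_ge_0 (w - u)).
    assert (0 < 2 * a1 * u ^ 2 + 2 * a2 * v ^ 2 + 2 * a3 * w ^ 2).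
    { pose proof (Sq (2 * a1) u); pose proof (Sq (2 * a2) v); pose proof (Sq (2 * a3) w).
      destruct Hne as [Hu | [Hv | Hw]];
        [pose proof (Sq' (2 * a1) u) | pose proof (Sq' (2 * a2) v) | pose proof (Sq' (2 * a3) w)]; lra. }
    unfold F; lra. }
  match goal with |- ?L < 0 => replace L with (- (2 / sqrt (hex_disc c1 c2 c3)) * F) end.
  - assert (0 < 2 / sqrt (hex_disc c1 c2 c3)) by (apply Rdiv_lt_0_compat; lra); nra.
  - unfold hess_diag, hess_off, F, a1, a2, a3.
    rewrite (hex_disc_swap23 c1 c2 c3), (hex_disc_swap12 c1 c3 c2), (hex_disc_swap23 c2 c1 c3),
      (hex_disc_swap12 c1 c2 c3), (hex_disc_swap23 c1 c2 c3).
    field; repeat split; lra.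
Qed.

Lemma hess_neg A B C wi wj wk ai aj ak : inW A B C wi wj wk -> (ai <> 0 \/ aj <> 0 \/ ak <> 0) ->
  hess A B C wi wj wk ai aj ak ai aj ak < 0.
Proof. intros (W1 & W2 & W3) Hne; apply hess_form_neg; auto; apply edge_cosh_gt_1; assumption. Qed.
Lemma is_derive_theta_partials A B C wi wj wk : inW A B C wi wj wk ->
  let H := hess A B C wi wj wk in
  is_derive (fun x => theta_i A B C wi x wk) wj (H 0 1 0 1 0 0) /\
  is_derive (fun x => theta_j A B C x wj wk) wi (H 1 0 0 0 1 0) /\
  is_derive (fun x => theta_j A B C wi wj x) wk (H 0 0 1 0 1 0) /\
  is_derive (fun x => theta_k A B C wi x wk) wj (H 0 1 0 0 0 1) /\
  is_derive (fun x => theta_k A B C x wj wk) wi (H 1 0 0 0 0 1) /\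
  is_derive (fun x => theta_i A B C wi wj x) wk (H 0 0 1 1 0 0).
Proof.
  intros W H.
  assert (D : forall (gi gj gk : R -> R) a1 a2 a3 b1 b2 b3 t,
    is_derive gi t a1 -> is_derive gj t a2 -> is_derive gk t a3 -> gi t = wi -> gj t = wj -> gk t = wk ->
    is_derive (fun t => theta_dot A B C (gi t) (gj t) (gk t) b1 b2 b3) t (H a1 a2 a3 b1 b2 b3)).
  { intros gi gj gk a1 a2 a3 b1 b2 b3 t Di Dj Dk Ei Ej Ek; eapply is_derive_eq_val.
    - apply (is_derive_theta_dot_comp A B C gi gj gk (fun _ => b1) (fun _ => b2) (fun _ => b3));
        [exact Di | exact Dj | exact Dk | apply is_derive_Rconst .. | rewrite Ei, Ej, Ek; exact W].
    - rewrite Ei, Ej, Ek, (theta_dot_0 A B C wi wj wk); apply Rplus_0_r. }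
  split; [| split; [| split; [| split; [| split]]]].
  - apply (is_derive_ext (fun x => theta_dot A B C wi x wk 1 0 0)); [intros; unfold theta_dot; Rring |].
    exact (D (fun _ => wi) (fun x => x) (fun _ => wk) 0 1 0 1 0 0 wj (is_derive_Rconst _ _) (is_derive_Rid _) (is_derive_Rconst _ _) eq_refl eq_refl eq_refl).
  - apply (is_derive_ext (fun x => theta_dot A B C x wj wk 0 1 0)); [intros; unfold theta_dot; Rring |].
    exact (D (fun x => x) (fun _ => wj) (fun _ => wk) 1 0 0 0 1 0 wi (is_derive_Rid _) (is_derive_Rconst _ _) (is_derive_Rconst _ _) eq_refl eq_refl eq_refl).
  - apply (is_derive_ext (fun x => theta_dot A B C wi wj x 0 1 0)); [intros; unfold theta_dot; Rring |].
    exact (D (fun _ => wi) (fun _ => wj) (fun x => x) 0 0 1 0 1 0 wk (is_derive_Rconst _ _) (is_derive_Rconst _ _) (is_derive_Rid _) eq_refl eq_refl eq_refl).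
  - apply (is_derive_ext (fun x => theta_dot A B C wi x wk 0 0 1)); [intros; unfold theta_dot; Rring |].
    exact (D (fun _ => wi) (fun x => x) (fun _ => wk) 0 1 0 0 0 1 wj (is_derive_Rconst _ _) (is_derive_Rid _) (is_derive_Rconst _ _) eq_refl eq_refl eq_refl).
  - apply (is_derive_ext (fun x => theta_dot A B C x wj wk 0 0 1)); [intros; unfold theta_dot; Rring |].
    exact (D (fun x => x) (fun _ => wj) (fun _ => wk) 1 0 0 0 0 1 wi (is_derive_Rid _) (is_derive_Rconst _ _) (is_derive_Rconst _ _) eq_refl eq_refl eq_refl).
  - apply (is_derive_ext (fun x => theta_dot A B C wi wj x 1 0 0)); [intros; unfold theta_dot; Rring |].
    exact (D (fun _ => wi) (fun _ => wj) (fun x => x) 0 0 1 1 0 0 wk (is_derive_Rconst _ _) (is_derive_Rconst _ _) (is_derive_Rid _) eq_refl eq_refl eq_refl).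
Qed.

(** * The domain W *)

Lemma edge_arg_gt_1_iff l0 wa wb : 1 < edge_arg l0 wa wb <-> 0 < wa + wb + ln (cosh (l0 / 2)).
Proof.
  assert (HC : 0 < cosh (l0 / 2)) by (pose proof (cosh_ge_1 (l0 / 2)); lra).
  unfold edge_arg; rewrite <- (exp_ln _ HC) at 1; rewrite <- exp_plus, <- exp_0.
  split; [apply exp_lt_inv | apply exp_increasing].
Qed.

Lemma inW_iff A B C wi wj wk : inW A B C wi wj wk <->
  0 < wj + wk + ln (cosh (A / 2)) /\ 0 < wk + wi + ln (cosh (B / 2))
  /\ 0 < wi + wj + ln (cosh (C / 2)).
Proof. unfold inW; rewrite <- !edge_arg_gt_1_iff; reflexivity. Qed.

Lemma convex_comb_pos X Y t : 0 < X -> 0 < Y -> 0 <= t <= 1 -> 0 < X + t * (Y - X).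
Proof. intros; nra. Qed.

Lemma inW_segment A B C pi pj pk qi qj qk t :
  inW A B C pi pj pk -> inW A B C qi qj qk -> 0 <= t <= 1 ->
  inW A B C (pi + t * (qi - pi)) (pj + t * (qj - pj)) (pk + t * (qk - pk)).
Proof.
  rewrite !inW_iff; intros (P1 & P2 & P3) (Q1 & Q2 & Q3) Ht.
  pose proof (convex_comb_pos _ _ t P1 Q1 Ht); pose proof (convex_comb_pos _ _ t P2 Q2 Ht);
    pose proof (convex_comb_pos _ _ t P3 Q3 Ht).
  repeat split; lra.
Qed.

Lemma continuous_of_is_derive (f : R -> R) x l : is_derive f x l -> continuous f x.
Proof. intros H; apply (ex_derive_continuous (V := R_NormedModule)); exists l; exact H. Qed.

Lemma continuous_acosh y : 1 < y -> continuous acosh y.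
Proof. intros H; exact (continuous_of_is_derive _ _ _ (is_derive_acosh y H)). Qed.

Section ContinuityRules.
Context {U : UniformSpace}.
Implicit Types (f g : U -> R) (x : U).

Lemma continuous_Rplus f g x : continuous f x -> continuous g x -> continuous (fun y => f y + g y) x.
Proof. apply (continuous_plus f g). Qed.

Lemma continuous_Rmult f g x : continuous f x -> continuous g x -> continuous (fun y => f y * g y) x.
Proof. apply (@continuous_mult U R_AbsRing f g). Qed.

Lemma continuous_Rminus f g x : continuous f x -> continuous g x -> continuous (fun y => f y - g y) x.
Proof. intros; apply continuous_Rplus; [| apply (continuous_opp g)]; assumption. Qed.

Lemma continuous_Rcomp f (phi : R -> R) x :
  continuous f x -> continuous phi (f x) -> continuous (fun y => phi (f y)) x.
Proof. apply (continuous_comp f phi). Qed.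

Lemma continuous_Rdiv f g x : continuous f x -> continuous g x -> g x <> 0 ->
  continuous (fun y => f y / g y) x.
Proof.
  intros; apply continuous_Rmult; [| apply (continuous_Rcomp g Rinv)]; try apply continuous_Rinv;
    assumption.
Qed.

Lemma continuous_Rconst (a : R) x : continuous (fun _ : U => a) x.
Proof. apply continuous_const. Qed.

Lemma continuous_pos_locally f x : continuous f x -> 0 < f x -> locally x (fun y => 0 < f y).
Proof.
  intros Hc Hp; apply Hc; exists (mkposreal _ Hp); intros z Hz.
  apply Rabs_lt_between' in Hz; simpl in Hz; lra.
Qed.

End ContinuityRules.

Ltac cont_step := match goal with
 | |- continuous (fun _ => ?c) _ => apply continuous_Rconst
 | |- continuous (fun y => @?f y + @?g y) _ => apply (continuous_Rplus f g)
 | |- continuous (fun y => @?f y - @?g y) _ => apply (continuous_Rminus f g)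
 | |- continuous (fun y => @?f y * @?g y) _ => apply (continuous_Rmult f g)
 | |- continuous (fun y => @?f y / @?g y) _ => apply (continuous_Rdiv f g)
 | |- continuous (fun y => @?f y ^ 2) _ =>
     apply (continuous_ext (fun y => f y * f y)); [intros; simpl; ring |]
 | |- continuous (fun y => exp (@?f y)) _ => apply (continuous_Rcomp f exp); [| apply continuous_exp]
 | |- continuous (fun y => sqrt (@?f y)) _ => apply (continuous_Rcomp f sqrt); [| apply continuous_sqrt]
 | |- continuous (fun y => cosh (@?f y)) _ =>
     apply (continuous_Rcomp f cosh); [| exact (continuous_of_is_derive _ _ _ (is_derive_cosh _))]
 | |- continuous (fun y => sinh (@?f y)) _ =>
     apply (continuous_Rcomp f sinh); [| exact (continuous_of_is_derive _ _ _ (is_derive_sinh _))]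
 | |- continuous (fun y => acosh (@?f y)) _ => apply (continuous_Rcomp f acosh); [| apply continuous_acosh]
 | |- continuous (fun y => fst y) _ => apply continuous_fst
 | |- continuous (fun y => snd y) _ => apply continuous_snd
 | |- continuous (fun y => y) _ => apply continuous_id
 | |- continuous _ _ => assumption
 end.

Ltac cont := repeat cont_step.

Section ContinuityOfTheta.
Context {U : UniformSpace}.
Implicit Types (fi fj fk : U -> R) (x : U).

Lemma continuous_theta_i A B C fi fj fk x :
  continuous fi x -> continuous fj x -> continuous fk x -> inW A B C (fi x) (fj x) (fk x) ->
  continuous (fun y => theta_i A B C (fi y) (fj y) (fk y)) x.
Proof.
  intros Hi Hj Hk (W1 & W2 & W3); unfold theta_i, hex_opp, edge_len.
  assert (Pb := sinh_edge_len_pos B _ _ W2); assert (Pc := sinh_edge_len_pos C _ _ W3).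
  cont; try apply hex_arg_gt_1; try (apply Rgt_not_eq, Rmult_lt_0_compat); assumption.
Qed.

Lemma continuous_hess_diag (f1 f2 f3 : U -> R) x :
  continuous f1 x -> continuous f2 x -> continuous f3 x -> 1 < f1 x -> 1 < f2 x -> 1 < f3 x ->
  continuous (fun y => hess_diag (f1 y) (f2 y) (f3 y)) x.
Proof.
  intros; assert (0 < sqrt (hex_disc (f1 x) (f2 x) (f3 x))) by (apply sqrt_lt_R0, hex_disc_pos; lra).
  unfold hess_diag, hex_disc in *; cont; lra.
Qed.

Lemma continuous_hess_off (f1 f2 f3 : U -> R) x :
  continuous f1 x -> continuous f2 x -> continuous f3 x -> 1 < f1 x -> 1 < f2 x -> 1 < f3 x ->
  continuous (fun y => hess_off (f1 y) (f2 y) (f3 y)) x.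
Proof.
  intros; assert (0 < sqrt (hex_disc (f1 x) (f2 x) (f3 x))) by (apply sqrt_lt_R0, hex_disc_pos; lra).
  unfold hess_off, hex_disc in *; cont; nra.
Qed.

Lemma continuous_hess A B C fi fj fk (ai aj ak bi bj bk : U -> R) x :
  continuous fi x -> continuous fj x -> continuous fk x ->
  continuous ai x -> continuous aj x -> continuous ak x ->
  continuous bi x -> continuous bj x -> continuous bk x -> inW A B C (fi x) (fj x) (fk x) ->
  continuous (fun y => hess A B C (fi y) (fj y) (fk y) (ai y) (aj y) (ak y) (bi y) (bj y) (bk y)) x.
Proof.
  intros Hi Hj Hk Hai Haj Hak Hbi Hbj Hbk (W1 & W2 & W3).
  assert (C1 : continuous (fun y => edge_cosh A (fj y) (fk y)) x) by (unfold edge_cosh, edge_arg; cont).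
  assert (C2 : continuous (fun y => edge_cosh B (fk y) (fi y)) x) by (unfold edge_cosh, edge_arg; cont).
  assert (C3 : continuous (fun y => edge_cosh C (fi y) (fj y)) x) by (unfold edge_cosh, edge_arg; cont).
  apply edge_cosh_gt_1 in W1, W2, W3.
  unfold hess, hess_form.
  repeat match goal with
  | |- continuous (fun y => hess_diag (@?f y) (@?g y) (@?h y)) _ => apply (continuous_hess_diag f g h)
  | |- continuous (fun y => hess_off (@?f y) (@?g y) (@?h y)) _ => apply (continuous_hess_off f g h)
  | _ => cont_step
  end; assumption.
Qed.

End ContinuityOfTheta.

Ltac cont_theta := repeat match goal with
 | |- continuous (fun y => theta_dot _ _ _ _ _ _ _ _ _) _ => unfold theta_dot
 | |- continuous (fun y => theta_i ?A ?B ?C (@?f y) (@?g y) (@?h y)) _ =>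
     apply (continuous_theta_i A B C f g h)
 | |- continuous (fun y => theta_j ?A ?B ?C (@?f y) (@?g y) (@?h y)) _ =>
     apply (continuous_theta_i B C A g h f); [.. | apply inW_rot]
 | |- continuous (fun y => theta_k ?A ?B ?C (@?f y) (@?g y) (@?h y)) _ =>
     apply (continuous_theta_i C A B h f g); [.. | do 2 apply inW_rot]
 | |- continuous (fun y => hess ?A ?B ?C (@?f1 y) (@?f2 y) (@?f3 y)
                                (@?g1 y) (@?g2 y) (@?g3 y) (@?h1 y) (@?h2 y) (@?h3 y)) _ =>
     apply (continuous_hess A B C f1 f2 f3 g1 g2 g3 h1 h2 h3)
 | _ => cont_step
 end.

Lemma inW_locally {U : UniformSpace} A B C (fi fj fk : U -> R) x :
  continuous fi x -> continuous fj x -> continuous fk x -> inW A B C (fi x) (fj x) (fk x) ->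
  locally x (fun y => inW A B C (fi y) (fj y) (fk y)).
Proof.
  intros Hi Hj Hk; rewrite inW_iff; intros (H1 & H2 & H3).
  assert (L1 := continuous_pos_locally (fun y => fj y + fk y + ln (cosh (A / 2))) x ltac:(cont) H1).
  assert (L2 := continuous_pos_locally (fun y => fk y + fi y + ln (cosh (B / 2))) x ltac:(cont) H2).
  assert (L3 := continuous_pos_locally (fun y => fi y + fj y + ln (cosh (C / 2))) x ltac:(cont) H3).
  generalize (filter_and _ _ L1 (filter_and _ _ L2 L3)); apply filter_imp.
  intros y Hy; rewrite inW_iff; exact Hy.
Qed.

(** * The energy *)

Lemma RInt_derive_01 (f df : R -> R) :
  (forall t, 0 <= t <= 1 -> is_derive f t (df t)) -> (forall t, 0 <= t <= 1 -> continuous df t) ->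
  is_RInt df 0 1 (f 1 - f 0).
Proof.
  intros Hd Hc.
  apply (is_RInt_derive f df 0 1);
    intros t Ht; rewrite Rmin_left, Rmax_right in Ht by lra; auto.
Qed.

Lemma ex_RInt_01 (f : R -> R) : (forall t, 0 <= t <= 1 -> continuous f t) -> ex_RInt f 0 1.
Proof.
  intros Hc; apply (ex_RInt_continuous (V := R_CompleteNormedModule)).
  intros t Ht; rewrite Rmin_left, Rmax_right in Ht by lra; auto.
Qed.

Lemma energy_self A B C ci cj ck : energy A B C ci cj ck ci cj ck = 0.
Proof.
  unfold energy; rewrite (RInt_ext _ (fun _ => 0)) by (intros; rewrite !Rminus_diag; Rring).
  rewrite RInt_const; apply (scal_zero_r (V := R_NormedModule)).
Qed.

Section EnergyAlongLine.
Variables (A B C ci cj ck xi xj xk vi vj vk : R).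
Hypothesis Hc : inW A B C ci cj ck.

(* [P u t] is the point at time [t] of the segment from [c] to [x + u v]; [energy] at [x + u v]
   integrates [F u] over [[0, 1]]. *)
Let P a x v u t := a + t * (x + u * v - a).
Let inW_P u t := inW A B C (P ci xi vi u t) (P cj xj vj u t) (P ck xk vk u t).
Let F u t := theta_dot A B C (P ci xi vi u t) (P cj xj vj u t) (P ck xk vk u t)
               (xi + u * vi - ci) (xj + u * vj - cj) (xk + u * vk - ck).
Let dF u t := hess A B C (P ci xi vi u t) (P cj xj vj u t) (P ck xk vk u t)
                (t * vi) (t * vj) (t * vk) (xi + u * vi - ci) (xj + u * vj - cj) (xk + u * vk - ck)
              + theta_dot A B C (P ci xi vi u t) (P cj xj vj u t) (P ck xk vk u t) vi vj vk.

Lemma inW_line_segment u t : inW A B C (xi + u * vi) (xj + u * vj) (xk + u * vk) -> 0 <= t <= 1 ->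
  inW_P u t.
Proof. intros; apply inW_segment; assumption. Qed.

Lemma is_derive_energy_integrand u t : inW_P u t -> is_derive (fun u => F u t) u (dF u t).
Proof.
  intros W; apply (is_derive_theta_dot_comp A B C
    (fun u => P ci xi vi u t) (fun u => P cj xj vj u t) (fun u => P ck xk vk u t)
    (fun u => xi + u * vi - ci) (fun u => xj + u * vj - cj) (fun u => xk + u * vk - ck));
  [unfold P; auto_derive; [auto | Rring] .. | exact W].
Qed.

Lemma continuous_energy_integrand_derive u t : inW_P u t ->
  continuous (fun z : R * R => Derive (fun u => F u (snd z)) (fst z)) (u, t).
Proof.
  intros W; apply (continuous_ext_loc _ (fun z => dF (fst z) (snd z))).
  - assert (L : locally (u, t) (fun z : R * R => inW_P (fst z) (snd z)))
      by (apply inW_locally; [unfold P; cont .. | exact W]).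
    generalize L; apply filter_imp; intros z Hz.
    symmetry; apply is_derive_unique, is_derive_energy_integrand, Hz.
  - unfold dF, P; cont_theta; exact W.
Qed.

Lemma is_derive_energy_line_RInt s : inW A B C (xi + s * vi) (xj + s * vj) (xk + s * vk) ->
  is_derive (fun u => energy A B C ci cj ck (xi + u * vi) (xj + u * vj) (xk + u * vk)) s
    (RInt (fun t => dF s t) 0 1).
Proof.
  intros Ws.
  assert (Lu : locally s (fun u => inW A B C (xi + u * vi) (xj + u * vj) (xk + u * vk)))
    by (apply (inW_locally A B C (fun u => xi + u * vi) (fun u => xj + u * vj) (fun u => xk + u * vk));
        [cont .. | exact Ws]).
  rewrite (RInt_ext _ (fun t => Derive (fun u => F u t) s)).
  - apply (is_derive_RInt_param F 0 1 s); rewrite ?Rmin_left, ?Rmax_right by lra.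
    + generalize Lu; apply filter_imp; intros u Wu t Ht; eexists.
      apply is_derive_energy_integrand, inW_line_segment; assumption.
    + intros t Ht; apply continuity_2d_pt_filterlim, continuous_energy_integrand_derive.
      apply inW_line_segment; assumption.
    + generalize Lu; apply filter_imp; intros u Wu; apply ex_RInt_01; intros t Ht.
      unfold F, P; cont_theta; apply inW_line_segment; assumption.
  - intros t Ht; rewrite Rmin_left, Rmax_right in Ht by lra.
    symmetry; apply is_derive_unique, is_derive_energy_integrand, inW_line_segment; [assumption | lra].
Qed.

(* By the symmetry of [hess], [dF s] is the [t]-derivative of [theta_dot (P s t) (t v)]. *)
Lemma RInt_energy_integrand_derive s : inW A B C (xi + s * vi) (xj + s * vj) (xk + s * vk) ->
  RInt (fun t => dF s t) 0 1 = theta_dot A B C (xi + s * vi) (xj + s * vj) (xk + s * vk) vi vj vk.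
Proof.
  intros Ws.
  set (G t := theta_dot A B C (P ci xi vi s t) (P cj xj vj s t) (P ck xk vk s t) (t * vi) (t * vj) (t * vk)).
  assert (DG : forall t, 0 <= t <= 1 -> is_derive G t (dF s t)).
  { intros t Ht; eapply is_derive_eq_val.
    - apply (is_derive_theta_dot_comp A B C
        (fun t => P ci xi vi s t) (fun t => P cj xj vj s t) (fun t => P ck xk vk s t)
        (fun t => t * vi) (fun t => t * vj) (fun t => t * vk)
        t (xi + s * vi - ci) (xj + s * vj - cj) (xk + s * vk - ck) vi vj vk);
      [unfold P; auto_derive; [auto | Rring] .. | apply inW_line_segment; assumption].
    - unfold dF; rewrite hess_sym; reflexivity. }
  assert (CdF : forall t, 0 <= t <= 1 -> continuous (fun t => dF s t) t)
    by (intros; unfold dF, P; cont_theta; apply inW_line_segment; assumption).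
  rewrite (is_RInt_unique _ _ _ _ (RInt_derive_01 G (fun t => dF s t) DG CdF)).
  unfold G, P, theta_dot; rewrite !Rmult_0_l, !Rmult_1_l.
  replace (ci + (xi + s * vi - ci)) with (xi + s * vi) by ring.
  replace (cj + (xj + s * vj - cj)) with (xj + s * vj) by ring.
  replace (ck + (xk + s * vk - ck)) with (xk + s * vk) by ring; Rring.
Qed.

End EnergyAlongLine.

Lemma is_derive_energy_line A B C ci cj ck xi xj xk vi vj vk s :
  inW A B C ci cj ck -> inW A B C (xi + s * vi) (xj + s * vj) (xk + s * vk) ->
  is_derive (fun u => energy A B C ci cj ck (xi + u * vi) (xj + u * vj) (xk + u * vk)) s
    (theta_dot A B C (xi + s * vi) (xj + s * vj) (xk + s * vk) vi vj vk).
Proof.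
  intros Hc Ws.
  rewrite <- (RInt_energy_integrand_derive A B C ci cj ck xi xj xk vi vj vk Hc s Ws).
  exact (is_derive_energy_line_RInt A B C ci cj ck xi xj xk vi vj vk Hc s Ws).
Qed.

Lemma energy_secant A B C ci cj ck pi pj pk qi qj qk :
  inW A B C ci cj ck -> inW A B C pi pj pk -> inW A B C qi qj qk ->
  energy A B C ci cj ck qi qj qk - energy A B C ci cj ck pi pj pk
  = RInt (fun u => theta_dot A B C (pi + u * (qi - pi)) (pj + u * (qj - pj)) (pk + u * (qk - pk))
                     (qi - pi) (qj - pj) (qk - pk)) 0 1.
Proof.
  intros Hc Hp Hq.
  set (phi := fun u =>
    energy A B C ci cj ck (pi + u * (qi - pi)) (pj + u * (qj - pj)) (pk + u * (qk - pk))).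
  assert (E1 : phi 1 = energy A B C ci cj ck qi qj qk) by (unfold phi; f_equal; ring).
  assert (E0 : phi 0 = energy A B C ci cj ck pi pj pk) by (unfold phi; f_equal; ring).
  rewrite <- E1, <- E0; symmetry; apply is_RInt_unique, RInt_derive_01; intros u Hu.
  - apply (is_derive_energy_line A B C ci cj ck pi pj pk (qi - pi) (qj - pj) (qk - pk) u);
      [| apply inW_segment]; assumption.
  - cont_theta; apply inW_segment; assumption.
Qed.

Lemma RInt_lin3 (f g h : R -> R) a b x y z :
  ex_RInt f a b -> ex_RInt g a b -> ex_RInt h a b ->
  RInt (fun u => f u * x + g u * y + h u * z) a b = RInt f a b * x + RInt g a b * y + RInt h a b * z.
Proof.
  intros Hf Hg Hh; apply is_RInt_unique.
  assert (Scal : forall (k : R -> R) c, ex_RInt k a b -> is_RInt (fun u => k u * c) a b (RInt k a b * c)).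
  { intros k c Hk; apply (is_RInt_ext (fun u => c * k u)); [intros; apply Rmult_comm |].
    rewrite Rmult_comm; exact (is_RInt_scal (V := R_NormedModule) k a b c _
                                 (RInt_correct (V := R_CompleteNormedModule) k a b Hk)). }
  exact (is_RInt_plus (V := R_NormedModule) _ _ a b _ _
           (is_RInt_plus (V := R_NormedModule) _ _ a b _ _ (Scal f x Hf) (Scal g y Hg)) (Scal h z Hh)).
Qed.

Definition segment_avg (th : R -> R -> R -> R) pi pj pk qi qj qk :=
  RInt (fun u => th (pi + u * (qi - pi)) (pj + u * (qj - pj)) (pk + u * (qk - pk))) 0 1.

Lemma energy_secant_avg A B C ci cj ck pi pj pk qi qj qk :
  inW A B C ci cj ck -> inW A B C pi pj pk -> inW A B C qi qj qk ->
  energy A B C ci cj ck qi qj qk - energy A B C ci cj ck pi pj pk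
  = segment_avg (theta_i A B C) pi pj pk qi qj qk * (qi - pi)
  + segment_avg (theta_j A B C) pi pj pk qi qj qk * (qj - pj)
  + segment_avg (theta_k A B C) pi pj pk qi qj qk * (qk - pk).
Proof.
  intros Hc Hp Hq; rewrite energy_secant by assumption.
  unfold theta_dot, segment_avg; apply RInt_lin3; apply ex_RInt_01; intros u Hu;
    cont_theta; apply inW_segment; assumption.
Qed.

Lemma segment_avg_self th pi pj pk : segment_avg th pi pj pk pi pj pk = th pi pj pk.
Proof.
  unfold segment_avg; rewrite (RInt_ext _ (fun _ => th pi pj pk))
    by (intros; rewrite !Rminus_diag, !Rmult_0_r, !Rplus_0_r; reflexivity).
  rewrite RInt_const; cbn; unfold mult; cbn; ring.
Qed.

Lemma RInt_01_dist (f : R -> R) c e : ex_RInt f 0 1 ->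
  (forall u, 0 <= u <= 1 -> Rabs (f u - c) <= e) -> Rabs (RInt f 0 1 - c) <= e.
Proof.
  intros Hf Hb.
  replace (RInt f 0 1 - c) with (RInt (fun u => f u - c) 0 1).
  - replace e with ((1 - 0) * e) by ring; apply abs_RInt_le_const; [lra | | assumption].
    apply (ex_RInt_minus (V := R_NormedModule)); [assumption | apply ex_RInt_const].
  - rewrite (RInt_minus (V := R_CompleteNormedModule)) by (try assumption; apply ex_RInt_const).
    rewrite RInt_const; cbn; unfold mult; cbn; ring.
Qed.

Lemma continuous_segment_avg (th : R -> R -> R -> R) (gi gj gk : R -> R) s :
  continuous gi s -> continuous gj s -> continuous gk s ->
  continuous (fun q : R * R * R => th (fst (fst q)) (snd (fst q)) (snd q)) (gi s, gj s, gk s) ->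
  locally s (fun x => ex_RInt (fun u =>
    th (gi s + u * (gi x - gi s)) (gj s + u * (gj x - gj s)) (gk s + u * (gk x - gk s))) 0 1) ->
  continuous (fun x => segment_avg th (gi s) (gj s) (gk s) (gi x) (gj x) (gk x)) s.
Proof.
  intros Ci Cj Ck Cth Hex; apply filterlim_locally; intros eps; rewrite segment_avg_self.
  destruct (Cth _ (locally_ball (th (gi s) (gj s) (gk s)) (pos_div_2 eps))) as [d Hd].
  assert (Shrink : forall a b u, 0 <= u <= 1 -> ball a d b -> ball a d (a + u * (b - a))).
  { intros a b u Hu Hab; change (Rabs (a + u * (b - a) - a) < d);
    change (Rabs (b - a) < d) in Hab.
    replace (a + u * (b - a) - a) with (u * (b - a)) by ring; rewrite Rabs_mult, (Rabs_pos_eq u) by lra.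
    pose proof (Rabs_pos (b - a)); nra. }
  assert (Li : locally s (fun x => ball (gi s) d (gi x))) by exact (Ci _ (locally_ball _ d)).
  assert (Lj : locally s (fun x => ball (gj s) d (gj x))) by exact (Cj _ (locally_ball _ d)).
  assert (Lk : locally s (fun x => ball (gk s) d (gk x))) by exact (Ck _ (locally_ball _ d)).
  generalize (filter_and _ _ Hex (filter_and _ _ Li (filter_and _ _ Lj Lk))).
  apply filter_imp; intros x (Ex & Bi & Bj & Bk).
  change (Rabs (segment_avg th (gi s) (gj s) (gk s) (gi x) (gj x) (gk x) - th (gi s) (gj s) (gk s)) < eps).
  apply Rle_lt_trans with (eps / 2); [| destruct eps; simpl; lra].
  apply RInt_01_dist; [assumption |]; intros u Hu; left.
  exact (Hd (_, _, _) (conj (conj (Shrink _ _ u Hu Bi) (Shrink _ _ u Hu Bj)) (Shrink _ _ u Hu Bk))).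
Qed.

Lemma is_derive_mult_vanishing (I G : R -> R) (s dG : R) :
  is_derive G s dG -> G s = 0 -> continuous I s -> is_derive (fun x => I x * G x) s (I s * dG).
Proof.
  intros HG G0 HI; apply is_derive_Reals; apply is_derive_Reals in HG; intros e He.
  set (M := Rabs (I s) + 1); set (e' := Rmin 1 (e / (2 * (Rabs dG + 1)))).
  assert (HM : 0 < M) by (unfold M; pose proof (Rabs_pos (I s)); lra).
  assert (He' : 0 < e') by (apply Rmin_glb_lt; [lra | apply Rdiv_lt_0_compat; pose proof (Rabs_pos dG); lra]).
  destruct (HG (e / (2 * M))) as [d1 Hd1]; [apply Rdiv_lt_0_compat; lra |].
  destruct (proj1 (filterlim_locally I (I s)) HI (mkposreal e' He')) as [d2 Hd2].
  assert (Pd : 0 < Rmin d1 d2) by (apply Rmin_glb_lt; apply cond_pos).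
  exists (mkposreal _ Pd); intros h Hh0 Hh; simpl in Hh.
  specialize (Hd1 h Hh0 (Rlt_le_trans _ _ _ Hh (Rmin_l _ _))).
  assert (Hd2' : Rabs (I (s + h) - I s) < e').
  { apply (Hd2 (s + h)); change (Rabs (s + h - s) < d2).
    replace (s + h - s) with h by ring; exact (Rlt_le_trans _ _ _ Hh (Rmin_r _ _)). }
  rewrite G0, Rminus_0_r in Hd1; rewrite G0, Rmult_0_r, Rminus_0_r.
  replace (I (s + h) * G (s + h) / h - I s * dG)
    with (I (s + h) * (G (s + h) / h - dG) + (I (s + h) - I s) * dG) by (field; assumption).
  assert (KI : Rabs (I (s + h)) <= M).
  { unfold M; replace (I (s + h)) with (I (s + h) - I s + I s) by ring.
    pose proof (Rabs_triang (I (s + h) - I s) (I s)); pose proof (Rmin_l 1 (e / (2 * (Rabs dG + 1)))).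
    unfold e' in Hd2'; lra. }
  assert (T1 : Rabs (I (s + h)) * Rabs (G (s + h) / h - dG) <= M * (e / (2 * M)))
    by (apply Rmult_le_compat; try apply Rabs_pos; lra).
  assert (T2 : Rabs (I (s + h) - I s) * Rabs dG <= e / (2 * (Rabs dG + 1)) * Rabs dG).
  { apply Rmult_le_compat_r; [apply Rabs_pos |].
    pose proof (Rmin_r 1 (e / (2 * (Rabs dG + 1)))); unfold e' in Hd2'; lra. }
  assert (T3 : e / (2 * (Rabs dG + 1)) * Rabs dG < e / 2).
  { pose proof (Rabs_pos dG); apply Rmult_lt_reg_r with (2 * (Rabs dG + 1)); [lra |].
    field_simplify; lra. }
  assert (T4 : M * (e / (2 * M)) = e / 2) by (field; lra).
  eapply Rle_lt_trans; [apply Rabs_triang |]; rewrite !Rabs_mult; lra.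
Qed.

Lemma continuous_coords3 (q : R * R * R) :
  continuous (fun q : R * R * R => fst (fst q)) q /\ continuous (fun q : R * R * R => snd (fst q)) q
  /\ continuous (fun q : R * R * R => snd q) q.
Proof.
  destruct q as [[a b] c]; repeat split.
  - apply (continuous_comp fst fst); apply continuous_fst.
  - apply (continuous_comp fst snd); [apply continuous_fst | apply continuous_snd].
  - apply continuous_snd.
Qed.

(* [energy (g x) - energy (g s)] is the dot product of [g x - g s] with the averages of [theta]
   over the segment [[g s, g x]], which are continuous in [x] and equal [theta (g s)] at [x = s]. *)
Lemma is_derive_energy_comp A B C ci cj ck (gi gj gk : R -> R) (s dgi dgj dgk : R) :
  inW A B C ci cj ck -> is_derive gi s dgi -> is_derive gj s dgj -> is_derive gk s dgk ->
  inW A B C (gi s) (gj s) (gk s) ->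
  is_derive (fun x => energy A B C ci cj ck (gi x) (gj x) (gk x)) s
    (theta_dot A B C (gi s) (gj s) (gk s) dgi dgj dgk).
Proof.
  intros Hc Di Dj Dk Hp.
  assert (Ci := continuous_of_is_derive _ _ _ Di); assert (Cj := continuous_of_is_derive _ _ _ Dj);
    assert (Ck := continuous_of_is_derive _ _ _ Dk).
  assert (Lg : locally s (fun x => inW A B C (gi x) (gj x) (gk x))) by (apply inW_locally; assumption).
  destruct (continuous_coords3 (gi s, gj s, gk s)) as (C1 & C2 & C3).
  set (avg th x := segment_avg th (gi s) (gj s) (gk s) (gi x) (gj x) (gk x)).
  assert (Cavg : continuous (avg (theta_i A B C)) s /\ continuous (avg (theta_j A B C)) s
                 /\ continuous (avg (theta_k A B C)) s).
  { repeat split; apply (continuous_segment_avg _ gi gj gk s); try assumption;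
      try (cont_theta; exact Hp);
      generalize Lg; apply filter_imp; intros x Hx; apply ex_RInt_01; intros u Hu;
      cont_theta; apply inW_segment; assumption. }
  destruct Cavg as (CAi & CAj & CAk).
  apply (is_derive_ext_loc (fun x => avg (theta_i A B C) x * (gi x - gi s)
    + avg (theta_j A B C) x * (gj x - gj s) + avg (theta_k A B C) x * (gk x - gk s)
    + energy A B C ci cj ck (gi s) (gj s) (gk s))).
  { generalize Lg; apply filter_imp; intros x Hx.
    unfold avg; rewrite <- (energy_secant_avg A B C ci cj ck (gi s) (gj s) (gk s)) by assumption; Rring. }
  assert (Dv : forall (I g : R -> R) dg, is_derive g s dg -> continuous I s ->
                 is_derive (fun x => I x * (g x - g s)) s (I s * dg)).
  { intros I g dg Dg CI; apply is_derive_mult_vanishing; [| apply Rminus_diag | assumption].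
    eapply is_derive_eq_val; [apply is_derive_Rminus; [exact Dg | apply is_derive_Rconst] | Rring]. }
  eapply is_derive_eq_val.
  { apply is_derive_Rplus; [apply is_derive_Rplus; [apply is_derive_Rplus |] | apply is_derive_Rconst].
    - exact (Dv _ gi dgi Di CAi).
    - exact (Dv _ gj dgj Dj CAj).
    - exact (Dv _ gk dgk Dk CAk). }
  unfold avg; rewrite !segment_avg_self; unfold theta_dot; Rring.
Qed.

Lemma is_RInt_theta_dot_path A B C ci cj ck (gi gj gk dgi dgj dgk : R -> R) :
  inW A B C ci cj ck ->
  (forall t, 0 <= t <= 1 ->
     is_derive gi t (dgi t) /\ is_derive gj t (dgj t) /\ is_derive gk t (dgk t) /\
     continuous dgi t /\ continuous dgj t /\ continuous dgk t /\ inW A B C (gi t) (gj t) (gk t)) ->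
  gi 0 = ci -> gj 0 = cj -> gk 0 = ck ->
  is_RInt (fun t => theta_dot A B C (gi t) (gj t) (gk t) (dgi t) (dgj t) (dgk t)) 0 1
    (energy A B C ci cj ck (gi 1) (gj 1) (gk 1)).
Proof.
  intros Hc Hg Ei Ej Ek.
  replace (energy A B C ci cj ck (gi 1) (gj 1) (gk 1))
    with (energy A B C ci cj ck (gi 1) (gj 1) (gk 1) - energy A B C ci cj ck (gi 0) (gj 0) (gk 0))
    by (rewrite Ei, Ej, Ek, energy_self; apply Rminus_0_r).
  apply (RInt_derive_01 (fun t => energy A B C ci cj ck (gi t) (gj t) (gk t)));
    intros t Ht; destruct (Hg t Ht) as (Di & Dj & Dk & Ci & Cj & Ck & W).
  - apply is_derive_energy_comp; assumption.
  - assert (continuous gi t) by exact (continuous_of_is_derive _ _ _ Di).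
    assert (continuous gj t) by exact (continuous_of_is_derive _ _ _ Dj).
    assert (continuous gk t) by exact (continuous_of_is_derive _ _ _ Dk).
    cont_theta; exact W.
Qed.

Lemma is_derive_energy_partials A B C ci cj ck wi wj wk :
  inW A B C ci cj ck -> inW A B C wi wj wk ->
  is_derive (fun x => energy A B C ci cj ck x wj wk) wi (theta_i A B C wi wj wk) /\
  is_derive (fun x => energy A B C ci cj ck wi x wk) wj (theta_j A B C wi wj wk) /\
  is_derive (fun x => energy A B C ci cj ck wi wj x) wk (theta_k A B C wi wj wk).
Proof.
  intros Hc W.
  split; [| split]; eapply is_derive_eq_val.
  - exact (is_derive_energy_comp A B C ci cj ck (fun x => x) (fun _ => wj) (fun _ => wk) wi 1 0 0
             Hc (is_derive_Rid _) (is_derive_Rconst _ _) (is_derive_Rconst _ _) W).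
  - unfold theta_dot; Rring.
  - exact (is_derive_energy_comp A B C ci cj ck (fun _ => wi) (fun x => x) (fun _ => wk) wj 0 1 0
             Hc (is_derive_Rconst _ _) (is_derive_Rid _) (is_derive_Rconst _ _) W).
  - unfold theta_dot; Rring.
  - exact (is_derive_energy_comp A B C ci cj ck (fun _ => wi) (fun _ => wj) (fun x => x) wk 0 0 1
             Hc (is_derive_Rconst _ _) (is_derive_Rconst _ _) (is_derive_Rid _) W).
  - unfold theta_dot; Rring.
Qed.

(** * Concavity *)

Lemma MVT_open (f df : R -> R) a b : a < b -> (forall c, a <= c <= b -> is_derive f c (df c)) ->
  exists c, a < c < b /\ f b - f a = df c * (b - a).
Proof.
  intros Hab Hd; destruct (MVT_cor2 f df a b Hab) as (c & Ec & Hc).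
  - intros c Hc; apply is_derive_Reals, Hd, Hc.
  - exists c; split; assumption.
Qed.

Lemma strict_concave_of_derive2_neg (phi psi dpsi : R -> R) :
  (forall s, 0 <= s <= 1 -> is_derive phi s (psi s)) ->
  (forall s, 0 <= s <= 1 -> is_derive psi s (dpsi s)) ->
  (forall s, 0 <= s <= 1 -> dpsi s < 0) ->
  forall t, 0 < t < 1 -> t * phi 1 + (1 - t) * phi 0 < phi t.
Proof.
  intros Dphi Dpsi Neg t Ht.
  destruct (MVT_open phi psi 0 t) as (a & Ha & Ea); [lra | intros; apply Dphi; lra |].
  destruct (MVT_open phi psi t 1) as (b & Hb & Eb); [lra | intros; apply Dphi; lra |].
  destruct (MVT_open psi dpsi a b) as (c & Hc & Ec); [lra | intros; apply Dpsi; lra |].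
  assert (dpsi c < 0) by (apply Neg; lra).
  assert (psi b < psi a) by nra.
  assert (t * (1 - t) * psi b < t * (1 - t) * psi a) by (apply Rmult_lt_compat_l; nra).
  nra.
Qed.

Lemma energy_strict_concave A B C ci cj ck xi xj xk yi yj yk t :
  inW A B C ci cj ck -> inW A B C xi xj xk -> inW A B C yi yj yk ->
  (xi, xj, xk) <> (yi, yj, yk) -> 0 < t < 1 ->
  t * energy A B C ci cj ck xi xj xk + (1 - t) * energy A B C ci cj ck yi yj yk <
  energy A B C ci cj ck (t * xi + (1 - t) * yi) (t * xj + (1 - t) * yj) (t * xk + (1 - t) * yk).
Proof.
  intros Hc Hx Hy Hne Ht.
  set (vi := xi - yi); set (vj := xj - yj); set (vk := xk - yk).
  assert (Hv : vi <> 0 \/ vj <> 0 \/ vk <> 0).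
  { destruct (Req_dec vi 0), (Req_dec vj 0), (Req_dec vk 0); auto.
    exfalso; apply Hne; unfold vi, vj, vk in *; f_equal; [f_equal |]; lra. }
  assert (HW : forall s, 0 <= s <= 1 -> inW A B C (yi + s * vi) (yj + s * vj) (yk + s * vk))
    by (intros; apply inW_segment; assumption).
  set (phi := fun s => energy A B C ci cj ck (yi + s * vi) (yj + s * vj) (yk + s * vk)).
  replace (energy A B C ci cj ck xi xj xk) with (phi 1) by (unfold phi, vi, vj, vk; f_equal; ring).
  replace (energy A B C ci cj ck yi yj yk) with (phi 0) by (unfold phi; f_equal; ring).
  replace (energy A B C ci cj ck _ _ _) with (phi t) by (unfold phi, vi, vj, vk; f_equal; ring).
  apply (strict_concave_of_derive2_neg phi
    (fun s => theta_dot A B C (yi + s * vi) (yj + s * vj) (yk + s * vk) vi vj vk)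
    (fun s => hess A B C (yi + s * vi) (yj + s * vj) (yk + s * vk) vi vj vk vi vj vk));
    [intros s Hs .. | exact Ht].
  - exact (is_derive_energy_line A B C ci cj ck yi yj yk vi vj vk s Hc (HW s Hs)).
  - eapply is_derive_eq_val.
    + apply (is_derive_theta_dot_comp A B C (fun s => yi + s * vi) (fun s => yj + s * vj)
        (fun s => yk + s * vk) (fun _ => vi) (fun _ => vj) (fun _ => vk));
        [apply is_derive_line | apply is_derive_line | apply is_derive_line
        | apply is_derive_Rconst | apply is_derive_Rconst | apply is_derive_Rconst | apply HW, Hs].
    + rewrite theta_dot_0; apply Rplus_0_r.
  - apply hess_neg; [apply HW, Hs | exact Hv].
Qed.

Theorem corollary4 (l0jk l0ki l0ij : R) (ci cj ck : R) :
  0 < l0jk -> 0 < l0ki -> 0 < l0ij ->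
  inW l0jk l0ki l0ij ci cj ck ->
  let th_i := theta_i l0jk l0ki l0ij in
  let th_j := theta_j l0jk l0ki l0ij in
  let th_k := theta_k l0jk l0ki l0ij in
  let E := energy l0jk l0ki l0ij ci cj ck in
  (* (1) the 1-form th_i dw_i + th_j dw_j + th_k dw_k is closed on W *)
  (forall wi wj wk, inW l0jk l0ki l0ij wi wj wk ->
     ex_derive (fun x => th_i wi x wk) wj /\ ex_derive (fun x => th_j x wj wk) wi /\
     ex_derive (fun x => th_j wi wj x) wk /\ ex_derive (fun x => th_k wi x wk) wj /\
     ex_derive (fun x => th_k x wj wk) wi /\ ex_derive (fun x => th_i wi wj x) wk /\
     Derive (fun x => th_i wi x wk) wj = Derive (fun x => th_j x wj wk) wi /\
     Derive (fun x => th_j wi wj x) wk = Derive (fun x => th_k wi x wk) wj /\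
     Derive (fun x => th_k x wj wk) wi = Derive (fun x => th_i wi wj x) wk) /\
  (* (2) well-definedness: the integral along any C^1 path in W from c to x equals E x *)
  (forall (gi gj gk dgi dgj dgk : R -> R),
     (forall t, 0 <= t <= 1 ->
        is_derive gi t (dgi t) /\ is_derive gj t (dgj t) /\ is_derive gk t (dgk t) /\
        continuous dgi t /\ continuous dgj t /\ continuous dgk t /\
        inW l0jk l0ki l0ij (gi t) (gj t) (gk t)) ->
     gi 0 = ci -> gj 0 = cj -> gk 0 = ck ->
     is_RInt (fun t => th_i (gi t) (gj t) (gk t) * dgi t
                     + th_j (gi t) (gj t) (gk t) * dgj t
                     + th_k (gi t) (gj t) (gk t) * dgk t) 0 1
             (E (gi 1) (gj 1) (gk 1))) /\
  (forall xi xj xk yi yj yk t,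
     inW l0jk l0ki l0ij xi xj xk -> inW l0jk l0ki l0ij yi yj yk ->
     (xi, xj, xk) <> (yi, yj, yk) -> 0 < t < 1 ->
     t * E xi xj xk + (1 - t) * E yi yj yk <
     E (t * xi + (1 - t) * yi) (t * xj + (1 - t) * yj) (t * xk + (1 - t) * yk)) /\
  (forall wi wj wk, inW l0jk l0ki l0ij wi wj wk ->
     is_derive (fun x => E x wj wk) wi (th_i wi wj wk) /\
     is_derive (fun x => E wi x wk) wj (th_j wi wj wk) /\
     is_derive (fun x => E wi wj x) wk (th_k wi wj wk)).
Proof.
  intros _ _ _ Hc; cbv zeta; split; [| split; [| split]].
  - intros wi wj wk W.
    destruct (is_derive_theta_partials _ _ _ _ _ _ W) as (D1 & D2 & D3 & D4 & D5 & D6).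
    refine (conj (ex_intro _ _ D1) (conj (ex_intro _ _ D2) (conj (ex_intro _ _ D3)
      (conj (ex_intro _ _ D4) (conj (ex_intro _ _ D5) (conj (ex_intro _ _ D6) (conj _ (conj _ _)))))))).
    + apply (Derive_eq_of_is_derive _ _ _ _ _ _ D1 D2), hess_sym.
    + apply (Derive_eq_of_is_derive _ _ _ _ _ _ D3 D4), hess_sym.
    + apply (Derive_eq_of_is_derive _ _ _ _ _ _ D5 D6), hess_sym.
  - intros; apply is_RInt_theta_dot_path; assumption.
  - intros; apply energy_strict_concave; assumption.
  - intros; apply is_derive_energy_partials; assumption.
Qed.
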